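(* Under the assumptions below, if $\sigma_b \neq 0$ then \[ W_{\mathrm{out}} W_{\mathrm{in}} = U \Big(I_{m} - s^{-1} \big(I_m - B_1^{\dagger} B_1\big) B_2^\top B_2 \Big) B_1^{\dagger}, \qquad s = B_2 \big(I - B_1^{\dagger} B_1\big) B_2^\top \in \mathbb{R}. \] If $\sigma_b = 0$ then instead \[ W_{\mathrm{out}} W_{\mathrm{in}} = U B_1^{\dagger}. \]
   Context: Consider the untrained linear diagonal continuous-time reservoir $\dot{r}(t) = (-1 + \omega) r(t) + W_{\mathrm{in}} u(t) + \sigma_b \mathbf{1}_n$, with reservoir state $r(t)\in\mathbb{R}^n$, input $u(t)\in\mathbb{R}^d$, input matrix $W_{\mathrm{in}}\in\mathbb{R}^{n\times d}$, scalars $\omega<1$ and $\sigma_b\in\mathbb{R}$, and $\mathbf{1}_n$ the all-ones vector. The reservoir is driven by a training input $u$ on $[0,T]$ from $r(0)=0$, and snapshots are collected at equally spaced times $t_1,\dots,t_m\in[0,T]$ (spacing $h$) into $U=[u(t_1)\cdots u(t_m)]\in\mathbb{R}^{d\times m}$ and $R=[r(t_1)\cdots r(t_m)]\in\mathbb{R}^{n\times m}$ ($R$ assumed full row rank). The readout is obtained by least squares, $W_{\mathrm{out}} = U R^{\top}(RR^{\top})^{-1} = U R^{\dagger}$ ($\dagger$ is the Moore–Penrose pseudoinverse), and the trained closed-loop system is $\dot r = ((-1+\omega)I + W_{\mathrm{in}}W_{\mathrm{out}}) r + \sigma_b \mathbf{1}_n$. By the variation of constants formula, $r(t_i) = W_{\mathrm{in}}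 b_1(t_i) + b_2(t_i)\mathbf{1}_n$ with $b_1(t_i) = \int_0^{t_i} e^{(\omega-1)(t_i-\tau)}u(\tau)\,d\tau \in\mathbb{R}^d$ and $b_2(t_i) = \sigma_b\big(e^{(\omega-1)t_i}-1\big)/(\omega-1)\in\mathbb{R}$; define $B_1 = [b_1(t_1)\cdots b_1(t_m)]$ and $B_2 = [b_2(t_1)\cdots b_2(t_m)]$. Data informativity assumption: (1) $u\in L^2([0,T];\mathbb{R}^d)$; (2) if $\sigma_b=0$, then $m\ge d$ and the components $u_1,\dots,u_d$ are linearly independent in $L^2([0,T];\mathbb{R})$; (3) if $\sigma_b\neq 0$, then $m\ge d+1$ and $u_1,\dots,u_d$ together with the constant function $1$ are linearly independent in $L^2([0,T];\mathbb{R})$. The sample times are assumed to lie outside the Lebesgue-measure-zero set on which the rows of $B_1$ and $B_2$ fail to be mutually linearly independent. Further assume $W_{\mathrm{in}}$ has full column rank $d$ and $\mathbf{1}_n\notin \operatorname{Im} W_{\mathrm{in}}$. *)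

From HB Require Import structures.
From mathcomp Require Import all_boot all_order all_algebra.
From mathcomp Require Import all_classical all_reals all_analysis.
Set Implicit Arguments. Unset Strict Implicit. Unset Printing Implicit Defensive.
Import Order.TTheory GRing.Theory Num.Theory.
Local Open Scope classical_set_scope.
Local Open Scope ring_scope.

Section Reservoir.
Variable R : realType.

Definition is_MP_pinv (p q : nat) (A : 'M[R]_(p, q)) (X : 'M[R]_(q, p)) : Prop :=
  [/\ A *m X *m A = A, X *m A *m X = X,
      (A *m X)^T = A *m X & (X *m A)^T = X *m A].

Definition L2_on (T : R) (f : R -> R) : Prop :=
  let I : set R := `[0, T]%classic in
  measurable_fun I f /\
  (\int[@lebesgue_measure R]_(x in I) ((f x) ^+ 2)%:E < +oo)%E.

(* f = 0 as an element of L^2([0,T]) : f vanishes a.e. on [0,T]. *)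
Definition L2_zero_on (T : R) (f : R -> R) : Prop :=
  (@lebesgue_measure R).-negligible (`[0, T]%classic `&` [set x | f x != 0]).

Definition L2_lin_indep (T : R) (d : nat) (u : 'I_d -> R -> R) (with_one : bool) : Prop :=
  forall (c : 'I_d -> R) (c0 : R),
    L2_zero_on T (fun x => \sum_(k < d) c k * u k x + (if with_one then c0 else 0)) ->
    (forall k, c k = 0) /\ (with_one -> c0 = 0).

Definition b1 (d : nat) (omega : R) (u : 'I_d -> R -> R) (t : R) : 'cV[R]_d :=
  \col_k Rintegral (@lebesgue_measure R) `[0, t]%classic
          (fun tau => expR ((omega - 1) * (t - tau)) * u k tau).

Definition b2 (omega sigma_b t : R) : R :=
  sigma_b * (expR ((omega - 1) * t) - 1) / (omega - 1).

(* reservoir state r(t) = W_in b_1(t) + b_2(t) 1_n (variation of constants) *)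
Definition rstate (n d : nat) (Win : 'M[R]_(n, d)) (omega sigma_b : R)
  (u : 'I_d -> R -> R) (t : R) : 'cV[R]_n :=
  Win *m b1 omega u t + b2 omega sigma_b t *: const_mx 1.

Definition sample_time (m : nat) (t0 h : R) (i : 'I_m) : R := t0 + i%:R * h.

Definition Bmat1 (m d : nat) (omega : R) (u : 'I_d -> R -> R) (t0 h : R) : 'M[R]_(d, m) :=
  \matrix_(k, i) b1 omega u (sample_time t0 h i) k 0.

Definition Bmat2 (m : nat) (omega sigma_b t0 h : R) : 'M[R]_(1, m) :=
  \matrix_(k, i) b2 omega sigma_b (sample_time t0 h i).

Definition Rmat (m n d : nat) (Win : 'M[R]_(n, d)) (omega sigma_b : R)
  (u : 'I_d -> R -> R) (t0 h : R) : 'M[R]_(n, m) :=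
  \matrix_(j, i) rstate Win omega sigma_b u (sample_time t0 h i) j 0.

Definition Umat (m d : nat) (u : 'I_d -> R -> R) (t0 h : R) : 'M[R]_(d, m) :=
  \matrix_(k, i) u k (sample_time t0 h i).

(* least-squares readout W_out = U R^T (R R^T)^{-1} *)
Definition Wout (m n d : nat) (U : 'M[R]_(d, m)) (Rm : 'M[R]_(n, m)) : 'M[R]_(d, n) :=
  U *m Rm^T *m invmx (Rm *m Rm^T).

End Reservoir.

From HB Require Import structures.
From mathcomp Require Import all_boot all_order all_algebra.
From mathcomp Require Import all_classical all_reals all_analysis.
Import Order.TTheory GRing.Theory Num.Theory.
Set Implicit Arguments.
Unset Strict Implicit.
Unset Printing Implicit Defensive.
Local Open Scope classical_set_scope.
Local Open Scope ring_scope.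

(* The reservoir states factor as R = M C with M = [W_in 1_n] of full column
   rank and C = [B1; B2] of full row rank.  Hence the least-squares readout
   satisfies W_out M = U C^+, and W_out W_in consists of the first d columns
   of U C^+.  For a full-row-rank C the pseudoinverse C^+ is the unique right
   inverse G with G C symmetric, and bordering B1 by the row B2 gives C^+
   explicitly in terms of B1^+ and the Schur complement s (Greville's formula). *)

(* For a matrix of full row rank this characterizes its Moore-Penrose
   pseudoinverse. *)
Definition is_sym_rinv (F : pzRingType) k m (C : 'M[F]_(k, m)) (G : 'M[F]_(m, k)) :=
  C *m G = 1%:M /\ (G *m C)^T = G *m C.

Lemma sym_rinv_unique (F : comPzRingType) k m (C : 'M[F]_(k, m)) (G G' : 'M[F]_(m, k)) :
  is_sym_rinv C G -> is_sym_rinv C G' -> G = G'.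
Proof.
move=> [CG symGC] [CG' symG'C].
have trC : C^T = G' *m C *m C^T.
  by rewrite -symG'C -trmx_mul mulmxA CG' mul1mx.
have GC : G *m C = G' *m C.
  rewrite -symGC trmx_mul trC -[_ *m G^T]mulmxA -trmx_mul symGC.
  by rewrite mulmxA -(mulmxA G' C G) CG mulmx1.
by rewrite -[G]mulmx1 -CG' mulmxA GC -mulmxA CG' mulmx1.
Qed.

Lemma mulmx_tr_row_eq0 (F : realFieldType) k (v : 'rV[F]_k) :
  v *m v^T = 0 -> v = 0.
Proof.
move=> /(congr1 (fun A : 'M[F]_1 => A 0 0)); rewrite !mxE => sum_sq0.
apply/rowP => j; rewrite mxE.
have sq_ge0 i : xpredT i -> 0 <= v 0 i * v^T i 0 by rewrite mxE -expr2 sqr_ge0.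
move: (psumr_eq0P sq_ge0 sum_sq0 (isT : xpredT j)).
by rewrite mxE -expr2 => /eqP; rewrite sqrf_eq0 => /eqP.
Qed.

Lemma row_free_gram_unit (F : realFieldType) k m (A : 'M[F]_(k, m)) :
  row_free A -> A *m A^T \in unitmx.
Proof.
move=> freeA; rewrite -row_free_unit; apply/inj_row_free => v vAAt0.
apply: (row_free_inj freeA); rewrite mul0mx; apply: mulmx_tr_row_eq0.
by rewrite trmx_mul !mulmxA -(mulmxA v) vAAt0 !mul0mx.
Qed.

Lemma gram_sym_rinv (F : realFieldType) k m (A : 'M[F]_(k, m)) :
  row_free A -> is_sym_rinv A (A^T *m invmx (A *m A^T)).
Proof.
move=> freeA; split; first by rewrite mulmxA mulmxV // row_free_gram_unit.
by rewrite !trmx_mul trmx_inv trmx_mul trmxK !mulmxA.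
Qed.

Lemma sym_rinv_mull (F : fieldType) n k m (M : 'M[F]_(n, k)) (C : 'M[F]_(k, m)) Q :
  row_full M -> is_sym_rinv (M *m C) Q -> is_sym_rinv C (Q *m M).
Proof.
move=> fullM [MCQ symQMC]; split; last by rewrite -mulmxA.
by apply: (row_full_inj fullM); rewrite !mulmxA MCQ mul1mx mulmx1.
Qed.

Lemma row_free_col_mx_notin (F : fieldType) k m (A : 'M[F]_(k, m)) (b : 'rV[F]_m) :
  row_free A -> ~~ (b <= A)%MS -> row_free (col_mx A b).
Proof.
rewrite /row_free => /eqP rankA bA; rewrite eqn_leq rank_leq_row -addsmxE /=.
rewrite addn1 -{1}rankA (ltn_leqif (mxrank_leqif_sup (addsmxSl A b))).
by rewrite addsmx_sub submx_refl.
Qed.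

Lemma MP_pinv_sym_rinv (R : realType) k m (A : 'M[R]_(k, m)) (X : 'M[R]_(m, k)) :
  row_free A -> is_MP_pinv A X -> is_sym_rinv A X.
Proof.
move=> freeA [AXA _ _ symXA]; split=> //.
by apply: (row_free_inj freeA); rewrite mul1mx AXA.
Qed.

Section Greville.
Variables (F : realFieldType) (d m : nat) (B : 'M[F]_(d, m)) (b : 'rV[F]_m).
Variable Bd : 'M[F]_(m, d).
Hypothesis Bd_sym_rinv : is_sym_rinv B Bd.

(* P is the orthogonal projector onto the kernel of B, and s is the Schur
   complement of B B^T in the Gram matrix of col_mx B b. *)
Let P := 1%:M - Bd *m B.
Let s := (b *m P *m b^T) 0 0.

Lemma trmx_null_proj : P^T = P.
Proof. by rewrite /P linearB /= trmx1 Bd_sym_rinv.2. Qed.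

Lemma mulmx_null_proj : B *m P = 0.
Proof. by rewrite /P mulmxBr mulmx1 mulmxA Bd_sym_rinv.1 mul1mx subrr. Qed.

Lemma null_proj_idem : P *m P = P.
Proof. by rewrite {1}/P mulmxBl mul1mx -mulmxA mulmx_null_proj mulmx0 subr0. Qed.

Lemma schur_scalar_mx : b *m P *m b^T = s%:M.
Proof. exact: mx11_scalar. Qed.

Lemma schur_neq0 : row_free (col_mx B b) -> s != 0.
Proof.
(* If s = 0 then b P = 0, i.e. b = (b Bd) B is a combination of the rows of B. *)
move=> freeC; apply/eqP => s0.
have bP0 : b *m P = 0.
  apply: mulmx_tr_row_eq0.
  by rewrite trmx_mul trmx_null_proj mulmxA -(mulmxA b) null_proj_idem schur_scalar_mx s0 raddf0.
pose v : 'rV[F]_(d + 1) := row_mx (- (b *m Bd)) 1%:M.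
have vC0 : v *m col_mx B b = 0 *m col_mx B b.
  rewrite mul0mx mul_row_col mul1mx mulNmx addrC.
  by move: bP0; rewrite /P mulmxBr mulmx1 mulmxA.
have := congr1 (fun A : 'rV[F]_(d + 1) => rsubmx A 0 0) (row_free_inj freeC vC0).
by rewrite /= row_mxKr linear0 !mxE => /eqP; rewrite oner_eq0.
Qed.

Definition greville_pinv : 'M[F]_(m, d + 1) :=
  row_mx ((1%:M - s^-1 *: (P *m b^T *m b)) *m Bd) (s^-1 *: (P *m b^T)).

Lemma greville_sym_rinv : row_free (col_mx B b) -> is_sym_rinv (col_mx B b) greville_pinv.
Proof.
move=> /schur_neq0 s_neq0; split.
  rewrite mul_col_row !mulmxA mulmxBr mulmx1 !mulmxBr !mulmx1 -!scalemxAr !mulmxA.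
  rewrite mulmx_null_proj schur_scalar_mx !mul0mx !scaler0 subr0 mul_scalar_mx scalerA mulVf //.
  by rewrite scale1r Bd_sym_rinv.1 subrr mul0mx scale_scalar_mx mulVf // scalar_mx_block.
set Z := P *m b^T *m b.
have ZP : Z *m P = Z - Z *m (Bd *m B) by rewrite /P mulmxBr mulmx1.
have -> : greville_pinv *m col_mx B b = Bd *m B + s^-1 *: (Z *m P).
  rewrite ZP scalerBr mul_row_col -(mulmxA _ Bd B) mulmxBl mul1mx -!scalemxAl -/Z.
  by rewrite addrA [LHS]addrAC.
by rewrite linearD linearZ /= Bd_sym_rinv.2 !trmx_mul trmxK trmx_null_proj !mulmxA.
Qed.

End Greville.

Lemma Wout_mul_factor (R : realType) n k m d (U : 'M[R]_(d, m))
    (M : 'M[R]_(n, k)) (C : 'M[R]_(k, m)) (G : 'M[R]_(m, k)) :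
  row_full M -> row_free (M *m C) -> is_sym_rinv C G -> Wout U (M *m C) *m M = U *m G.
Proof.
move=> fullM freeMC symG; rewrite /Wout -2!mulmxA; congr (_ *m _).
symmetry; apply: sym_rinv_unique symG _; rewrite mulmxA.
exact: sym_rinv_mull fullM (gram_sym_rinv freeMC).
Qed.

Lemma Rmat_factor (R : realType) m n d (Win : 'M[R]_(n, d)) omega sigma_b u t0 h :
  Rmat m Win omega sigma_b u t0 h =
  row_mx Win (const_mx 1) *m col_mx (Bmat1 m omega u t0 h) (Bmat2 m omega sigma_b t0 h).
Proof.
rewrite mul_row_col; apply/matrixP => j i.
rewrite !mxE /rstate big_ord1 !mxE mul1r mulr1; congr (_ + _).
by apply: eq_bigr => k _; rewrite !mxE.
Qed.

Lemma Bmat2_sigma0 (R : realType) m (omega t0 h : R) : Bmat2 m omega 0 t0 h = 0.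
Proof. by apply/matrixP => k i; rewrite !mxE /b2 !mul0r. Qed.

Theorem lemma1 (R : realType) (n d m : nat) (Win : 'M[R]_(n, d))
  (omega sigma_b T t0 h : R) (u : 'I_d -> R -> R) (B1d : 'M[R]_(m, d)) :
  omega < 1 -> 0 < h -> 0 <= t0 ->
  (forall i : 'I_m, sample_time t0 h i <= T) ->
  (* data informativity *)
  (forall k, L2_on T (u k)) ->
  (sigma_b = 0 -> (d <= m)%N /\ L2_lin_indep T u false) ->
  (sigma_b != 0 -> (d.+1 <= m)%N /\ L2_lin_indep T u true) ->
  (* sample times outside the degenerate set: rows of B1, B2 linearly independent *)
  row_free (Bmat1 m omega u t0 h) ->
  (sigma_b != 0 -> row_free (col_mx (Bmat1 m omega u t0 h) (Bmat2 m omega sigma_b t0 h))) ->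
  (* R full row rank, W_in full column rank, 1_n not in Im W_in *)
  row_free (Rmat m Win omega sigma_b u t0 h) ->
  \rank Win = d ->
  ~~ ((const_mx 1 : 'rV[R]_n) <= Win^T)%MS ->
  (* B1d is the Moore-Penrose pseudoinverse of B1 *)
  is_MP_pinv (Bmat1 m omega u t0 h) B1d ->
  let B1 := Bmat1 m omega u t0 h in
  let B2 := Bmat2 m omega sigma_b t0 h in
  let U := Umat m u t0 h in
  let WoW := Wout U (Rmat m Win omega sigma_b u t0 h) *m Win in
  let s : R := (B2 *m (1%:M - B1d *m B1) *m B2^T) 0 0 in
  (sigma_b != 0 ->
     WoW = U *m (1%:M - s^-1 *: ((1%:M - B1d *m B1) *m B2^T *m B2)) *m B1d) /\
  (sigma_b = 0 -> WoW = U *m B1d).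
Proof.
move=> _ _ _ _ _ _ _ freeB1 freeC freeR rankWin notin1 /(MP_pinv_sym_rinv freeB1) B1d_rinv.
move=> B1 B2 U WoW s; rewrite {}/WoW.
have fullWin : row_full Win by apply/eqP.
split=> [sigma_neq0 | sigma0].
  move: freeR; rewrite Rmat_factor; set M := row_mx Win _ => freeR.
  have fullM : row_full M.
    rewrite /row_full -mxrank_tr tr_row_mx trmx_const.
    by apply: row_free_col_mx_notin; rewrite // /row_free mxrank_tr rankWin.
  have -> : Win = M *m col_mx 1%:M 0 by rewrite mul_row_col mulmx1 mulmx0 addr0.
  rewrite mulmxA (Wout_mul_factor _ fullM freeR (greville_sym_rinv B1d_rinv (freeC sigma_neq0))).
  by rewrite -mulmxA mul_row_col mulmx1 mulmx0 addr0 mulmxA.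
subst sigma_b; move: freeR.
rewrite Rmat_factor Bmat2_sigma0 mul_row_col mulmx0 addr0 => freeR.
exact: Wout_mul_factor.
Qed.
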